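(* Let $R$ be a finite local commutative ring with residue field of order $q$, let $K\le R^\times$, and suppose the cyclotomic scheme $\mathrm{Cyc}(K,R)$ is normal. Suppose that $K+I=K$ for some ideal $I$ of $R$ (where $K+I=\{k+x: k\in K, x\in I\}$). Then $I=\{0\}$ unless $q=2$. Moreover, if $q=2$, then $I\subseteq I_0$, where $I_0=\{x\in\mathrm{rad}(R):\ x\,\mathrm{rad}(R)=\{0\}\}$.
   Context: All rings have an identity. For a finite local commutative ring $R$, $\mathrm{rad}(R)$ is its unique maximal ideal and $R/\mathrm{rad}(R)$ its residue field. For a subgroup $K$ of $R^\times$, the cyclotomic scheme $\mathrm{Cyc}(K,R)$ is the pair $(R,\mathrm{Rel}(K,R))$, where $\mathrm{Rel}(K,R)$ is the set of binary relations $\{(x,y)\in R\times R:\ y-x\in rK\}$, $r\in R$. Its automorphism group $\mathrm{Aut}(\mathcal C)$ is the group of permutations $f$ of $R$ with $S^f=S$ for every $S\in\mathrm{Rel}(K,R)$. $\mathrm{A\Gamma L}_1(R)$ is the group of permutations $x\mapsto ax^\sigma+b$ with $a\in R^\times$, $b\in R$, $\sigma\in\mathrm{Aut}(R)$. The scheme is normal if $\mathrm{Aut}(\mathcal C)\le\mathrm{A\Gamma L}_1(R)$. *)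

From HB Require Import structures.
From mathcomp Require Import all_boot all_order all_algebra all_fingroup.
Set Implicit Arguments. Unset Strict Implicit. Unset Printing Implicit Defensive.
Import GRing.Theory.
Local Open Scope ring_scope.

Section Defs.
Variable R : finComUnitRingType.

Definition is_ideal (I : {set R}) : Prop :=
  0 \in I /\ (forall x y, x \in I -> y \in I -> x + y \in I) /\
  (forall r x, x \in I -> r * x \in I).

Definition is_maximal_ideal (M : {set R}) : Prop :=
  is_ideal M /\ M != [set: R] /\
  (forall J, is_ideal J -> M \subset J -> J = M \/ J = [set: R]).

Definition is_local : Prop :=
  exists M, is_maximal_ideal M /\ forall M', is_maximal_ideal M' -> M' = M.

Definition residue_order (M : {set R}) : nat :=
  #|[set [set x + m | m in M] | x : R]|.

Definition Kset (K : {group {unit R}}) : {set R} := [set val u | u in K].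

Definition cycRel (K : {group {unit R}}) (r : R) : {set R * R} :=
  [set p : R * R | p.2 - p.1 \in [set r * k | k in Kset K]].

Definition cyc_aut (K : {group {unit R}}) (f : {perm R}) : Prop :=
  forall r : R, [set (f p.1, f p.2) | p in cycRel K r] = cycRel K r.

Definition is_ring_aut (s : R -> R) : Prop :=
  bijective s /\ (forall x y, s (x + y) = s x + s y) /\
  (forall x y, s (x * y) = s x * s y) /\ s 1 = 1.

Definition in_AGammaL1 (f : R -> R) : Prop :=
  exists (a : {unit R}) (b : R) (s : R -> R),
    is_ring_aut s /\ forall x, f x = val a * s x + b.

Definition cyc_normal (K : {group {unit R}}) : Prop :=
  forall f : {perm R}, cyc_aut K f -> in_AGammaL1 f.

Definition I0 (M : {set R}) : {set R} :=
  [set x in M | [forall y in M, x * y == 0]].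

End Defs.

From mathcomp Require Import all_boot all_order all_algebra all_fingroup.
From mathcomp Require Import ring.
Import GRing.Theory.
Local Open Scope ring_scope.
Set Implicit Arguments.

(* If 1 + I lies in K and phi : R -> R satisfies phi y - phi x \in (y - x) I
   for all x, y, then x |-> x + phi x multiplies every
   difference y - x by an element of K, so it is an automorphism of Cyc(K,R).
   Normality makes it affine, whence phi (x + y) + phi 0 = phi x + phi y.
   Functions that are locally constant, resp. locally linear, on the cosets of
   rad(R) with values in I have this property: applied to x = 1 and to a y
   with y, y - 1 outside rad(R) (which exists iff q <> 2) the identity kills I,
   and applied to x = 1, y = m in rad(R) it gives I * rad(R) = 0. Finally I
   is proper, as 1 + (-1) = 0 is not in K, so it lies in rad(R). *)

Section Ideals.
Variable R : finComUnitRingType.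
Implicit Types (J : {set R}) (x y : R).

Section IdealLemmas.
Variable J : {set R}.
Hypothesis idJ : is_ideal J.

Lemma ideal0 : 0 \in J.
Proof. by case: idJ. Qed.

Lemma idealD x y : x \in J -> y \in J -> x + y \in J.
Proof. by case: idJ => _ [addJ _]; apply: addJ. Qed.

Lemma idealMl r x : x \in J -> r * x \in J.
Proof. by case: idJ => _ [_ mulJ]; apply: mulJ. Qed.

Lemma idealMr x r : x \in J -> x * r \in J.
Proof. by rewrite mulrC; apply: idealMl. Qed.

Lemma idealN x : x \in J -> - x \in J.
Proof. by move=> Jx; rewrite -mulN1r idealMl. Qed.

Lemma idealNE x : (- x \in J) = (x \in J).
Proof. by apply/idP/idP => /idealN //; rewrite opprK. Qed.

Lemma idealB x y : x \in J -> y \in J -> x - y \in J.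
Proof. by move=> Jx Jy; rewrite idealD ?idealN. Qed.

Lemma ideal_unit x : x \in J -> x \is a GRing.unit -> J = setT.
Proof.
move=> Jx ux; apply/setP=> y; rewrite inE.
by rewrite -[y]mulr1 -(mulVr ux) mulrA idealMl.
Qed.

Lemma ideal_memB x y : x - y \in J -> (x \in J) = (y \in J).
Proof.
move=> Jxy; apply/idP/idP=> [Jx | Jy].
  by rewrite -[y](subrK x) addrC -opprB idealB.
by rewrite -[x](subrK y) idealD.
Qed.

End IdealLemmas.

Definition idealb J : bool :=
  [&& 0 \in J, [forall x, forall y, (x \in J) ==> (y \in J) ==> (x + y \in J)]
    & [forall r, forall x, (x \in J) ==> (r * x \in J)]].

Lemma idealP J : reflect (is_ideal J) (idealb J).
Proof.
apply: (iffP and3P) => [[J0 /forallP addJ /forallP mulJ] | [J0 [addJ mulJ]]].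
  split=> //; split=> [x y Jx Jy | r x Jx].
    by have /forallP/(_ y) := addJ x; rewrite Jx Jy.
  by have /forallP/(_ x) := mulJ r; rewrite Jx.
split=> //; apply/forallP=> x; apply/forallP=> y; apply/implyP=> Jx.
  by apply/implyP=> Jy; apply: addJ.
exact: mulJ.
Qed.

(* A proper ideal of largest cardinality above J is maximal. *)
Lemma maximal_ideal_above J :
  is_ideal J -> J != setT -> exists2 M, is_maximal_ideal M & J \subset M.
Proof.
move=> idJ JT.
pose P J' := [&& idealb J', J \subset J' & J' != setT].
have PJ : P J by rewrite /P subxx JT !andbT; apply/idealP.
have [M /and3P[/idealP idM JM MT] maxM] := arg_maxnP (fun J' => #|J'|) PJ.
exists M => //; split=> //; split=> // J' idJ' MJ'.
have [-> | J'T] := eqVneq J' setT; [by right | left].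
apply/eqP; rewrite eq_sym eqEcard MJ' /=; apply: maxM.
by rewrite /P (subset_trans JM MJ') J'T !andbT; apply/idealP.
Qed.

Variable M : {set R}.
Hypotheses (locR : is_local R) (maxM : is_maximal_ideal M).

Lemma ideal_max : is_ideal M.
Proof. by case: maxM. Qed.

Lemma max_neq1 : 1 \notin M.
Proof.
by apply: contraNN (proj1 (proj2 maxM)) => M1; rewrite (ideal_unit ideal_max M1) ?unitr1.
Qed.

Lemma unit_notin_max x : x \notin M -> x \is a GRing.unit.
Proof.
apply: contraNT => Ux.
pose Rx := [set r * x | r : R].
have idRx : is_ideal Rx.
  do 2?split.
  - by apply/imsetP; exists 0; rewrite ?mul0r.
  - move=> _ _ /imsetP[r _ ->] /imsetP[s _ ->].
    by apply/imsetP; exists (r + s); rewrite ?mulrDl.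
  - by move=> a _ /imsetP[r _ ->]; apply/imsetP; exists (a * r); rewrite ?mulrA.
have RxT : Rx != setT.
  apply: contraNN Ux => /eqP RxT; have /imsetP[r _ rx1] : 1 \in Rx by rewrite RxT inE.
  by apply/unitrP; exists r; rewrite [x * r]mulrC -rx1.
have [M' maxM' RxM'] := maximal_ideal_above idRx RxT.
have [M0 [_ uniqM0]] := locR.
rewrite (uniqM0 _ maxM) -(uniqM0 _ maxM') (subsetP RxM') //.
by apply/imsetP; exists 1; rewrite ?mul1r.
Qed.

Lemma max_add1 m : m \in M -> 1 + m \notin M.
Proof. by move=> Mm; rewrite (@ideal_memB _ ideal_max (1 + m) 1) ?max_neq1 // addrC addKr. Qed.

Lemma ideal_sub_max J : is_ideal J -> J != setT -> J \subset M.
Proof.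
move=> idJ JT; apply/subsetP => x Jx; apply: contraNT JT => Mx.
by rewrite (ideal_unit idJ Jx) ?unit_notin_max.
Qed.

Lemma coset_maxE x : [set x + m | m in M] = [set z | z - x \in M].
Proof.
apply/setP=> z; rewrite inE; apply/imsetP/idP => [[m Mm ->] | Mzx].
  by rewrite addrC addKr.
by exists (z - x); rewrite // addrC subrK.
Qed.

Lemma residue_order_two :
  (forall y, (y \in M) || (y - 1 \in M)) -> residue_order M = 2%N.
Proof.
move=> cover; rewrite /residue_order.
pose C a := [set z | z - a \in M].
have C_eq a b : a - b \in M -> C a = C b.
  move=> Mab; apply/setP=> z; rewrite !inE; apply/esym/(ideal_memB ideal_max).
  by rewrite (_ : _ - _ = a - b) //; ring.
have -> : [set [set x + m | m in M] | x : R] = [set C 0; C 1].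
  apply/setP=> X; rewrite !inE; apply/imsetP/orP => [[x _ ->] | ].
    rewrite coset_maxE -/(C x).
    case/orP: (cover x) => [Mx | Mx1]; first by left; rewrite (C_eq x 0) ?subr0.
    by right; rewrite (C_eq x 1).
  by case=> /eqP ->; [exists 0 | exists 1]; rewrite ?coset_maxE.
rewrite cards2; suff -> : C 0 != C 1 by [].
apply/negP => /eqP/setP/(_ 0); rewrite !inE subrr.
by rewrite (ideal0 ideal_max) add0r (idealNE ideal_max) (negbTE max_neq1).
Qed.

End Ideals.

Section Perturbation.
Variables (R : finComUnitRingType) (K : {group {unit R}}) (I : {set R}).
Hypothesis addK1I : forall i, i \in I -> 1 + i \in Kset K.

Definition divided_differences_in (phi : R -> R) :=
  forall x y, exists2 i, i \in I & phi y - phi x = (y - x) * i.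

Lemma scaled_Kset_mulr (v : {unit R}) r d : v \in K ->
  (d * val v \in [set r * k | k in Kset K]) = (d \in [set r * k | k in Kset K]).
Proof.
move=> Kv; apply/imsetP/imsetP => -[_ /imsetP[w Kw ->] def_d].
  exists (val (w * v^-1)%g); first by apply: imset_f; rewrite groupM ?groupV.
  by rewrite FinRing.val_unitM FinRing.val_unitV mulrA -def_d (mulrK (valP v)).
exists (val (w * v)%g); first by apply: imset_f; rewrite groupM.
by rewrite FinRing.val_unitM mulrA def_d.
Qed.

Lemma Kset1 : 1 \in Kset K.
Proof. by apply/imsetP; exists 1%g; rewrite ?FinRing.val_unit1. Qed.

Lemma ideal_neqT : is_ideal I -> I != setT.
Proof.
move=> idI; apply/eqP => IT.
have /imsetP[u _ u0] : 1 + -1 \in Kset K by rewrite addK1I // IT inE.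
by move: (valP u); rewrite -u0 subrr unitr0.
Qed.

Variable phi : R -> R.
Hypothesis phiI : divided_differences_in phi.

Definition perturb x := x + phi x.

Lemma perturb_diff x y : exists2 v, v \in K & perturb y - perturb x = (y - x) * val v.
Proof.
have [i Ii phi_xy] := phiI x y; have /imsetP[v Kv def_v] := addK1I Ii.
by exists v; rewrite // -def_v /perturb mulrDr mulr1 -phi_xy; ring.
Qed.

Lemma perturb_inj : injective perturb.
Proof.
move=> x y eq_xy; have [v _] := perturb_diff x y.
rewrite eq_xy subrr -(mul0r (val v)) => /(mulIr (valP v))/esym/eqP.
by rewrite subr_eq0 => /eqP.
Qed.

Lemma perturb_aut : cyc_aut K (perm perturb_inj).
Proof.
move=> r.
have relE x y : ((perturb x, perturb y) \in cycRel K r) = ((x, y) \in cycRel K r).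
  by rewrite !inE /=; have [v Kv ->] := perturb_diff x y; apply: scaled_Kset_mulr.
apply/setP=> -[a b]; apply/imsetP/idP => [[[x y] Rxy [-> ->]] | Rab].
  by rewrite !permE relE.
have perturbK z : perturb ((perm perturb_inj)^-1 z)%g = z.
  by have := permKV (perm perturb_inj) z; rewrite permE.
exists ((perm perturb_inj)^-1 a, (perm perturb_inj)^-1 b)%g; first by rewrite -relE !perturbK.
by rewrite /= !permKV.
Qed.

Lemma normal_perturb_additive x y :
  cyc_normal K -> phi (x + y) + phi 0 = phi x + phi y.
Proof.
move=> /(_ _ perturb_aut) [a [b [s [[_ [sD _]] def_f]]]].
have s0 : s 0 = 0 by apply: (addrI (s 0)); rewrite -sD !addr0.
have perturbE z : perturb z = val a * s z + b by rewrite -def_f permE.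
have : perturb (x + y) + perturb 0 = perturb x + perturb y.
  by rewrite !perturbE sD s0; ring.
rewrite /perturb add0r => affine_eq; apply: (addrI (x + y)).
by rewrite addrA affine_eq; ring.
Qed.

End Perturbation.

Definition coset_step (R : finComUnitRingType) (M : {set R}) (a c d : R) (x : R) :=
  if x - a \in M then c + d * x else 0.

Lemma coset_step_divided_differences (R : finComUnitRingType) (M I : {set R}) a c d :
  is_local R -> is_maximal_ideal M -> is_ideal I -> c \in I -> d \in I ->
  divided_differences_in I (coset_step M a c d).
Proof.
move=> locR maxM idI Ic Id x y; have idM := ideal_max maxM.
have stepI z : coset_step M a c d z \in I.
  rewrite /coset_step; case: ifP => _; last exact: ideal0 idI.
  by rewrite (idealD idI) ?(idealMr idI).
have [Myx | Myx] := boolP (y - x \in M).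
  have same_coset : (y - a \in M) = (x - a \in M).
    by apply: (ideal_memB idM); rewrite (_ : _ - _ = y - x) //; ring.
  rewrite /coset_step same_coset; case: ifP => _.
    by exists d => //; ring.
  by exists 0; rewrite ?(ideal0 idI) //; ring.
exists ((y - x)^-1 * (coset_step M a c d y - coset_step M a c d x)).
  by rewrite (idealMl idI) ?(idealB idI).
by rewrite mulrA divrr ?mul1r // (unit_notin_max locR maxM).
Qed.

Unset Implicit Arguments.

Theorem theorem1p4 (R : finComUnitRingType) (Hloc : is_local R)
  (M : {set R}) (HM : is_maximal_ideal M)
  (K : {group {unit R}}) (Hnorm : cyc_normal K)
  (I : {set R}) (HI : is_ideal I)
  (HKI : [set k + x | k in Kset K, x in I] = Kset K) :
  (residue_order M <> 2%N -> I = [set 0]) /\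
  (residue_order M = 2%N -> I \subset I0 M).
Proof.
have addK1I i : i \in I -> 1 + i \in Kset K.
  by move=> Ii; rewrite -HKI imset2_f ?Kset1.
have idM := ideal_max HM.
have IM : I \subset M := ideal_sub_max Hloc HM HI (ideal_neqT addK1I HI).
have step_additive a c d x y : c \in I -> d \in I ->
    coset_step M a c d (x + y) + coset_step M a c d 0 =
    coset_step M a c d x + coset_step M a c d y.
  move=> Ic Id; apply: (normal_perturb_additive addK1I _ _ _ Hnorm).
  exact: coset_step_divided_differences.
have M0 := ideal0 idM; have M1 := max_neq1 HM.
split=> [q_neq2 | _].
  have [y My My1] : exists2 y, y \notin M & y - 1 \notin M.
    case: (pickP [pred y | (y \notin M) && (y - 1 \notin M)]) => [y /andP[]|none].
      by exists y.
    case: q_neq2; apply: (residue_order_two HM) => y.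
    by move/negbT: (none y); rewrite negb_and !negbK.
  apply/setP => c; rewrite inE; apply/idP/eqP => [Ic | ->]; last exact: ideal0 HI.
  (* The 0 of [set 0] is elaborated as the unit 1%g of the additive group of R. *)
  change (c = 0).
  have := step_additive 1 c 0 1 y Ic (ideal0 HI).
  rewrite /coset_step [1 + y]addrC addrK sub0r subrr (idealNE idM).
  by rewrite (negbTE My) (negbTE My1) (negbTE M1) M0 mul0r !addr0 => /esym.
apply/subsetP => c Ic; rewrite inE (subsetP IM) //=.
apply/forall_inP => m Mm; have := step_additive 0 0 c 1 m (ideal0 HI) Ic.
rewrite /coset_step !subr0 (negbTE (max_add1 HM Mm)) (negbTE M1) M0 Mm.
by rewrite mulr0 !add0r => /esym/eqP.
Qed.
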